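(* For any real continuous function $f\in C(\Omega)$, $$|f-f\circ\sigma|_\infty=|Kf-f|_\infty\ \ge\ \|[\mathcal D,\pi(M_f)]\|\ \ge\ |f-Lf|_\infty.$$ Moreover, if $f$ does not depend on the first coordinate (i.e. $f(x)=f(y)$ whenever $x_i=y_i$ for all $i\ge2$), both inequalities are equalities.
   Context: $\Omega=\{0,1\}^{\mathbb N}$ with the shift $\sigma$; for $a\in\{0,1\}$, $ax=(a,x_1,\dots)$. $\mu$ is the measure of maximal entropy (uniform Bernoulli product measure), $L^2(\mu)$ the Hilbert space of square-integrable functions. $|\cdot|_\infty$ is the supremum norm. Ruelle operator $L\phi(x)=\frac12(\phi(0x)+\phi(1x))$; Koopman operator $K\phi=\phi\circ\sigma$. For $f\in C(\Omega)$, $M_f$ is the multiplication operator $g\mapsto fg$ on $L^2(\mu)$. On $\mathcal H=L^2(\mu)\times L^2(\mu)$ (norm $|(\phi_1,\phi_2)|^2=|\phi_1|^2+|\phi_2|^2$), $\mathcal D=\begin{pmatrix}0&K\\ L&0\end{pmatrix}$ and $\pi(A)=\begin{pmatrix}A&0\\0&A\end{pmatrix}$; $[\mathcal D,\pi(A)]=\mathcal D\pi(A)-\pi(A)\mathcal D$. $\|\cdot\|$ is the operator norm. *)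

From HB Require Import structures.
From mathcomp Require Import all_boot all_order all_algebra.
From mathcomp Require Import all_classical all_reals all_analysis.
Set Implicit Arguments. Unset Strict Implicit. Unset Printing Implicit Defensive.
Import Order.TTheory GRing.Theory Num.Theory.
Import numFieldNormedType.Exports.
Local Open Scope classical_set_scope.
Local Open Scope ring_scope.

(* Omega = {0,1}^N, with 0 ~ false, 1 ~ true; the paper's coordinate x_i
   (i >= 1) is [x (i-1)]. Topology: product topology (cantor_space). *)
Definition Omega := cantor_space.

Definition shiftO (x : Omega) : Omega := fun n => x n.+1.
Definition prefixO (a : bool) (x : Omega) : Omega :=
  fun n => if n is m.+1 then x m else a.

Definition cyl (w : seq bool) : set Omega :=
  [set x | forall i, (i < size w)%N -> x i = nth false w i].
Definition cylinders : set (set Omega) := [set cyl w | w in [set: seq bool]].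

Definition OmegaM := g_sigma_algebraType cylinders.

(* mu is the measure of maximal entropy: uniform Bernoulli product measure *)
Definition max_entropy_measure (R : realType) (mu : probability OmegaM R) :=
  forall w : seq bool, mu (cyl w) = ((2%:R ^- size w : R)%:E)%E.

Section Ops.
Variable R : realType.

Definition Lop (phi : Omega -> R) : Omega -> R :=
  fun x => (phi (prefixO false x) + phi (prefixO true x)) / 2%:R.
Definition Kop (phi : Omega -> R) : Omega -> R := phi \o shiftO.

Definition supn (g : Omega -> R) : \bar R :=
  ereal_sup [set (`|g x|)%:E | x in [set: Omega]].

Variable mu : probability OmegaM R.

Definition L2 (phi : Omega -> R) : Prop :=
  measurable_fun [set: OmegaM] (phi : OmegaM -> R) /\
  (\int[mu]_x ((phi x) ^+ 2)%:E < +oo)%E.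
Definition L2norm2 (phi : Omega -> R) : \bar R :=
  (\int[mu]_x ((phi x) ^+ 2)%:E)%E.

Definition Hnorm (v : (Omega -> R) * (Omega -> R)) : \bar R :=
  sqrte (L2norm2 v.1 + L2norm2 v.2)%E.

Definition opnorm (T : (Omega -> R) * (Omega -> R) -> (Omega -> R) * (Omega -> R))
  : \bar R :=
  ereal_inf [set C%:E | C in [set C : R | 0 <= C /\
     forall v, L2 v.1 -> L2 v.2 -> (Hnorm (T v) <= C%:E * Hnorm v)%E]].

End Ops.

Section Dirac.
Variable R : realType.
Local Notation H := ((Omega -> R) * (Omega -> R))%type.

Definition Dop (v : H) : H := (Kop v.2, Lop v.1).
Definition Mop (f : Omega -> R) (g : Omega -> R) : Omega -> R := fun x => f x * g x.
Definition piop (A : (Omega -> R) -> (Omega -> R)) (v : H) : H := (A v.1, A v.2).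
Definition commD (A : (Omega -> R) -> (Omega -> R)) (v : H) : H :=
  ((Dop (piop A v)).1 \- (piop A (Dop v)).1,
   (Dop (piop A v)).2 \- (piop A (Dop v)).2).
End Dirac.

(* Write g = Kf - f. The commutator maps (phi1, phi2) to
   (g * (phi2 o sigma), x |-> ((f(0x) - f x) phi1(0x) + (f(1x) - f x) phi1(1x)) / 2),
   and |f(ax) - f x| = |g(ax)|. Since mu is shift invariant and
   int h(0x) dmu + int h(1x) dmu = 2 int h dmu, both components are bounded in L^2 by
   |g|_oo times the norm of (phi1, phi2). Conversely, the image of (1_A o sigma, 0) is
   (0, 1_A (Lf - f)), so the operator norm bounds |Lf - f| on every cylinder A, hence
   everywhere by continuity of Lf - f. If f ignores the first coordinate then
   f = (Lf) o sigma, so Kf - f = K(f - Lf) and the two suprema agree. *)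

From HB Require Import structures.
From mathcomp Require Import all_boot all_order all_algebra.
From mathcomp Require Import all_classical all_reals all_analysis.
From mathcomp Require Import measurable_realfun ring lra.
Import Order.TTheory GRing.Theory Num.Theory.
Import numFieldNormedType.Exports.
Local Open Scope classical_set_scope.
Local Open Scope ring_scope.
Set Implicit Arguments. Unset Strict Implicit. Unset Printing Implicit Defensive.

Lemma mulr2_exp2VS (R : numFieldType) n : 2 * (2 ^- n.+1 : R) = 2 ^- n.
Proof. by rewrite exprS invfM mulrA divff ?mul1r ?pnatr_eq0. Qed.

Lemma exp2VS_add (R : numFieldType) n : (2 ^- n.+1 : R) + 2 ^- n.+1 = 2 ^- n.
Proof. by rewrite exprSr invfM -splitr. Qed.

Lemma sqr_le_of_norm (R : realDomainType) (a c : R) : `|a| <= c -> a ^+ 2 <= c ^+ 2.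
Proof. by rewrite ler_norml => /andP[? ?]; nra. Qed.

Lemma sqr_avg_le (R : realFieldType) (c a0 a1 u0 u1 : R) : `|a0| <= c -> `|a1| <= c ->
  ((a0 * u0 + a1 * u1) / 2) ^+ 2 <= c ^+ 2 / 2 * (u0 ^+ 2 + u1 ^+ 2).
Proof.
move=> /sqr_le_of_norm a0c /sqr_le_of_norm a1c.
have u0a0 : a0 ^+ 2 * u0 ^+ 2 <= c ^+ 2 * u0 ^+ 2 by rewrite ler_wpM2r ?sqr_ge0.
have u1a1 : a1 ^+ 2 * u1 ^+ 2 <= c ^+ 2 * u1 ^+ 2 by rewrite ler_wpM2r ?sqr_ge0.
have := sqr_ge0 (a0 * u0 - a1 * u1).
rewrite expr_div_n (_ : (2 : R) ^+ 2 = 4); last by rewrite expr2 -natrM.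
nra.
Qed.

(** * Cylinders in the Cantor space *)

Lemma cyl_nil : cyl [::] = setT.
Proof. by apply/seteqP; split => x // _ i; rewrite ltn0. Qed.

Lemma cyl_cons b w x : cyl (b :: w) x <-> x 0%N = b /\ cyl w (shiftO x).
Proof.
split=> [xbw|[x0b xw] [|i] //= iw]; last exact: xw.
by split=> [|i iw]; [exact: (xbw 0%N) | exact: (xbw i.+1)].
Qed.

Lemma cyl_mkseq (x y : Omega) n :
  cyl (mkseq x n) y <-> (forall i, (i < n)%N -> y i = x i).
Proof. by rewrite /cyl size_mkseq; split=> yx i ilt; rewrite yx ?nth_mkseq. Qed.

Lemma preimage_shiftO_cyl w :
  shiftO @^-1` cyl w = cyl (false :: w) `|` cyl (true :: w).
Proof.
apply/seteqP; split=> x /=; last by case=> /cyl_cons[].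
by move=> xw; case x0: (x 0%N); [right | left]; apply/cyl_cons.
Qed.

Lemma preimage_prefixO_cyl a b w :
  prefixO a @^-1` cyl (b :: w) = if a == b then cyl w else set0.
Proof.
apply/seteqP; split=> x /=; first by move/cyl_cons => [/= -> xw]; rewrite eqxx.
by case: eqP => [<- xw|//]; apply/cyl_cons.
Qed.

Lemma nbhs_cyl (z : Omega) (U : set Omega) :
  nbhs z U -> exists n, cyl (mkseq z n) `<=` U.
Proof.
(* The filter of cylinders around [z] converges pointwise to [z], so it is finer than [nbhs z]. *)
pose B := filter_from [set: nat] (fun n => cyl (mkseq z n)).
have FB : Filter B.
  apply: filter_from_filter; first by exists 0%N.
  move=> i j _ _; exists (maxn i j) => // y /cyl_mkseq yz.
  by split; apply/cyl_mkseq => k kl; apply: yz; rewrite leq_max kl ?orbT.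
have : {ptws, B --> (z : nat -> bool)}.
  apply/pointwise_cvgP => t A /nbhs_singleton Azt.
  by exists t.+1 => // y /cyl_mkseq yz; rewrite /= yz.
by move=> /[apply] -[n _ nU]; exists n.
Qed.

Lemma prefixO_continuous a : continuous (prefixO a).
Proof.
move=> x; apply/pointwise_cvgP => -[|m].
  move=> A /nbhs_singleton Aa.
  by apply: (@filterS _ (nbhs x) _ setT) => [y _|]; [exact: Aa | exact: filterT].
exact: (@proj_continuous nat (fun=> bool) m x).
Qed.

Lemma Lop_continuous (R : realType) (f : Omega -> R) :
  continuous f -> continuous (Lop f).
Proof.
move=> cf x; apply: cvgM; last exact: cvg_cst.
have cfa a : {for x, continuous (f \o prefixO a)}.
  by apply: continuous_comp; [exact: prefixO_continuous | exact: cf].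
exact: cvgD (cfa false) (cfa true).
Qed.

Lemma continuous_cyl_close (R : realType) (g : Omega -> R) (x : Omega) (e : R) :
  {for x, continuous g} -> 0 < e ->
  exists n, forall y, cyl (mkseq x n) y -> `|g x - g y| < e.
Proof.
move=> /cvgrPdist_lt gx /gx; exact: nbhs_cyl.
Qed.

Lemma measurable_cyl w : measurable (cyl w : set OmegaM).
Proof. by apply: sub_sigma_algebra; exists w. Qed.

Lemma measurable_shiftO : measurable_fun setT (shiftO : OmegaM -> OmegaM).
Proof.
apply: (@measurability _ _ OmegaM OmegaM setT _ cylinders) => // _ [_ [w _ <-] <-].
by rewrite setTI preimage_shiftO_cyl; apply: measurableU; exact: measurable_cyl.
Qed.

Lemma measurable_prefixO a : measurable_fun setT (prefixO a : OmegaM -> OmegaM).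
Proof.
apply: (@measurability _ _ OmegaM OmegaM setT _ cylinders) => // _ [_ [[|b w] _ <-] <-].
  by rewrite setTI cyl_nil preimage_setT.
rewrite setTI preimage_prefixO_cyl.
by case: eqP => _; [exact: measurable_cyl | exact: measurable0].
Qed.

Lemma open_measurable_cantor (U : set Omega) : open U -> measurable (U : set OmegaM).
Proof.
(* [U] is the countable union of the cylinders it contains. *)
move=> oU.
pose C k : set OmegaM := if unpickle k is Some w then
  (if pselect (cyl w `<=` U) then cyl w else set0) else set0.
suff -> : U = \bigcup_k C k.
  apply: bigcupT_measurable => k; rewrite /C.
  case: (unpickle k) => [w|]; last exact: measurable0.
  by case: (pselect (cyl w `<=` U)) => wU; [exact: measurable_cyl | exact: measurable0].
apply/seteqP; split=> [x Ux|x [k _]].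
  have [n xnU] := nbhs_cyl (open_nbhs_nbhs (conj oU Ux)).
  exists (pickle (mkseq x n)) => //; rewrite /C pickleK.
  by case: (pselect (cyl (mkseq x n) `<=` U)) => [nU|/(_ xnU)//]; apply/cyl_mkseq.
rewrite /C; case: (unpickle k) => [w|//].
by case: (pselect (cyl w `<=` U)) => // wU /wU.
Qed.

Lemma continuous_measurable_cantor (R : realType) (f : Omega -> R) :
  continuous f -> measurable_fun setT (f : OmegaM -> R).
Proof.
move=> cf; apply: (measurability _ (RGenOpens.measurableE R)).
move=> _ [_ [a [b ->]] <-]; rewrite setTI; apply: open_measurable_cantor.
by apply: open_comp => [x _|]; [exact: cf | exact: itv_open].
Qed.

(** * Integrals against the maximal entropy measure *)

Definition cylinders0 : set (set Omega) := cylinders `|` [set set0].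

Lemma setI_closed_cylinders0 : setI_closed cylinders0.
Proof.
have cylI w w' : (size w <= size w')%N -> cylinders0 (cyl w `&` cyl w').
  move=> ww'.
  have [agree|disagree] :=
    pselect (forall i, (i < size w)%N -> nth false w i = nth false w' i).
    left; exists w' => //; apply/seteqP; split=> [x xw'|x [_ //]].
    by split=> // i iw; rewrite agree //; apply: xw'; exact: leq_trans iw ww'.
  right; apply/seteqP; split=> x // [xw xw']; apply: disagree => i iw.
  by rewrite -xw // xw' //; exact: leq_trans iw ww'.
move=> _ _ [[w _ <-]|->] [[w' _ <-]|->]; rewrite ?set0I ?setI0; try by right.
by case: (leqP (size w) (size w')) => [/cylI //|/ltnW/cylI]; rewrite setIC.
Qed.

Lemma measurableE_cylinders0 : @measurable _ OmegaM = <<s cylinders0 >>.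
Proof.
apply/seteqP; split; first by apply: sub_sigma_algebra2 => A; left.
apply: smallest_sub; first exact: smallest_sigma_algebra.
by move=> A [cA|->]; [exact: sub_sigma_algebra | exact: measurable0].
Qed.

Lemma measure_cyl_unique (R : realType) (m1 m2 : {measure set OmegaM -> \bar R}) :
  (forall w, m1 (cyl w) = m2 (cyl w)) -> (m2 setT < +oo)%E ->
  forall A, measurable A -> m1 A = m2 A.
Proof.
move=> m12 m2T A mA.
apply: (@measure_unique _ R OmegaM cylinders0 (fun=> setT)) => //.
- exact: measurableE_cylinders0.
- exact: setI_closed_cylinders0.
- by move=> _; left; exists [::] => //; exact: cyl_nil.
- by rewrite bigcup_const.
- by move=> _ [[w _ <-]|->]; rewrite ?measure0.
- by rewrite -cyl_nil m12 cyl_nil.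
Qed.

Section max_entropy.
Variables (R : realType) (mu : probability OmegaM R).
Hypothesis Hmu : max_entropy_measure mu.
Local Open Scope ereal_scope.

Let mu_setT_lty : mu setT < +oo.
Proof. by rewrite probability_setT ltry. Qed.

Lemma pushforward_shiftO_cyl w :
  pushforward mu (shiftO : OmegaM -> OmegaM) (cyl w) = mu (cyl w).
Proof.
rewrite /pushforward preimage_shiftO_cyl measureU; try exact: measurable_cyl.
  apply: etrans (congr2 _ (Hmu (false :: w)) (Hmu (true :: w))) _.
  by apply: etrans (esym (EFinD _ _)) _; rewrite Hmu /= exp2VS_add.
by apply/seteqP; split=> x // [/cyl_cons[x0 _] /cyl_cons[]]; rewrite x0.
Qed.

Lemma pushforward_prefixO_cyl w :
  pushforward mu (prefixO false : OmegaM -> OmegaM) (cyl w) +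
  pushforward mu (prefixO true : OmegaM -> OmegaM) (cyl w) = 2%:E * mu (cyl w).
Proof.
rewrite /pushforward; case: w => [|b w].
  by rewrite cyl_nil !preimage_setT probability_setT mule1.
have mu_cyl_cons : mu (cyl (b :: w)) = (2 ^- (size w).+1)%:E := Hmu (b :: w).
rewrite !preimage_prefixO_cyl mu_cyl_cons {mu_cyl_cons}.
by case: b => /=; rewrite measure0 ?adde0 ?add0e Hmu -EFinM mulr2_exp2VS.
Qed.

Lemma ge0_integral_shiftO (h : OmegaM -> \bar R) :
  measurable_fun setT h -> (forall x, 0 <= h x) ->
  \int[mu]_x h (shiftO x) = \int[mu]_x h x.
Proof.
move=> mh h0.
transitivity (\int[pushforward mu (shiftO : OmegaM -> OmegaM)]_x h x).
  by rewrite ge0_integral_pushforward ?preimage_setT //; exact: measurable_shiftO.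
(* The measure structure of the pushforward is inferred anew and asks again for measurability. *)
apply: eq_measure_integral => [|? A mA _]; first exact: measurable_shiftO.
apply: measure_cyl_unique mA => [w|]; first exact: pushforward_shiftO_cyl.
exact: mu_setT_lty.
Qed.

Lemma ge0_integral_prefixO (h : OmegaM -> \bar R) :
  measurable_fun setT h -> (forall x, 0 <= h x) ->
  \int[mu]_x h (prefixO false x) + \int[mu]_x h (prefixO true x) = 2%:E * \int[mu]_x h x.
Proof.
move=> mh h0.
have pushE a : \int[mu]_x h (prefixO a x) =
               \int[pushforward mu (prefixO a : OmegaM -> OmegaM)]_x h x.
  by rewrite ge0_integral_pushforward ?preimage_setT //; exact: measurable_prefixO.
rewrite !pushE -ge0_integral_measure_add //; try exact: measurable_prefixO.
move=> ? ?; rewrite -[RHS](ge0_integral_mscale mu measurableT (2%:R%:nng)%R) //.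
apply: eq_measure_integral => A mA _; apply: measure_cyl_unique mA => [w|].
  (* here [measure_add] is unfolded to a two-term [msum], out of reach of [measure_addE] *)
  rewrite /= /msum 2!big_ord_recl big_ord0 adde0; exact: pushforward_prefixO_cyl.
by rewrite /= /mscale lte_mul_pinfty //; exact: mu_setT_lty.
Qed.
End max_entropy.

(** * The commutator [D, pi(M_f)] *)

Section commutator.
Variables (R : realType) (f : Omega -> R).
Implicit Types (g h : Omega -> R) (v : (Omega -> R) * (Omega -> R)).

Lemma commD_Mop_fst v x : (commD (Mop f) v).1 x = (Kop f x - f x) * v.2 (shiftO x).
Proof. by rewrite /= /Mop /Kop /=; ring. Qed.

Lemma commD_Mop_snd v x : (commD (Mop f) v).2 x =
  ((f (prefixO false x) - f x) * v.1 (prefixO false x) +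
   (f (prefixO true x) - f x) * v.1 (prefixO true x)) / 2.
Proof. by rewrite /= /Mop /Lop /=; field. Qed.

Lemma commD_Mop_Kop_snd g h x : (commD (Mop f) (Kop g, h)).2 x = g x * (Lop f x - f x).
Proof. by rewrite /= /Mop /Lop /Kop /=; field. Qed.

End commutator.

Lemma L2norm2_ge0 (R : realType) (mu : probability OmegaM R) (g : Omega -> R) :
  (0 <= L2norm2 mu g)%E.
Proof. by apply: integral_ge0 => x _; rewrite lee_fin sqr_ge0. Qed.

Lemma L2norm2_eq0 (R : realType) (mu : probability OmegaM R) (g : Omega -> R) :
  (forall x, g x = 0) -> L2norm2 mu g = 0%E.
Proof.
move=> g0; rewrite /L2norm2; under eq_integral do rewrite g0 expr0n.
exact: integral0.
Qed.

Lemma sqrte_le_mulE (R : realType) (C : R) (a b : \bar R) : 0 <= C -> (0 <= b)%E ->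
  (sqrte a <= C%:E * sqrte b)%E = (a <= (C ^+ 2)%:E * b)%E.
Proof.
move=> C0 b0; have -> : C%:E = sqrte (C ^+ 2)%:E.
  by rewrite EFin_expe sqrte_sqr gee0_abs // lee_fin.
by rewrite -sqrteM ?lee_fin ?sqr_ge0 // lee_sqrt // mule_ge0 // lee_fin sqr_ge0.
Qed.

Definition opbound (R : realType) (mu : probability OmegaM R)
    (T : (Omega -> R) * (Omega -> R) -> (Omega -> R) * (Omega -> R)) (C : R) :=
  forall v, L2 mu v.1 -> L2 mu v.2 -> (Hnorm mu (T v) <= C%:E * Hnorm mu v)%E.

Section measurable_ops.
Variable R : realType.
Implicit Types g : OmegaM -> R.

Lemma measurable_Kop g : measurable_fun setT g -> measurable_fun setT (Kop g : OmegaM -> R).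
Proof. by move=> mg; exact: measurableT_comp mg measurable_shiftO. Qed.

Lemma measurable_Lop g : measurable_fun setT g -> measurable_fun setT (Lop g : OmegaM -> R).
Proof.
move=> mg; apply: measurable_funM => //; apply: measurable_funD;
  exact: measurableT_comp mg (measurable_prefixO _).
Qed.

Lemma measurable_sqr_EFin g : measurable_fun setT g ->
  measurable_fun setT (fun x => (g x ^+ 2)%:E).
Proof. by move=> mg; apply/measurable_EFinP; exact: measurable_funX. Qed.

End measurable_ops.

Section upper_bound.
Variables (R : realType) (mu : probability OmegaM R) (f : Omega -> R) (c : R).
Hypothesis Hmu : max_entropy_measure mu.
Hypothesis mf : measurable_fun setT (f : OmegaM -> R).
Hypothesis fc : forall x, `|Kop f x - f x| <= c.
Local Open Scope ereal_scope.

Lemma L2norm2_commD_Mop_fst v : measurable_fun setT (v.2 : OmegaM -> R) ->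
  L2norm2 mu (commD (Mop f) v).1 <= (c ^+ 2)%:E * L2norm2 mu v.2.
Proof.
move=> mv2.
rewrite /L2norm2 -(ge0_integral_shiftO Hmu (measurable_sqr_EFin mv2)); last first.
  by move=> x; rewrite lee_fin sqr_ge0.
rewrite -ge0_integralZl_EFin ?sqr_ge0 //; last first.
- exact: measurable_sqr_EFin (measurable_Kop mv2).
- by move=> x _; rewrite lee_fin sqr_ge0.
apply: ge0_le_integral => //.
- by move=> x _; rewrite lee_fin sqr_ge0.
- apply: measurable_sqr_EFin; rewrite /commD /=.
  apply: measurable_funB; first exact: measurable_Kop (measurable_funM mf mv2).
  exact: measurable_funM mf (measurable_Kop mv2).
- apply/measurable_EFinP; apply: measurable_funM => //.
  exact: measurable_funX (measurable_Kop mv2).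
move=> x _; rewrite -EFinM lee_fin commD_Mop_fst exprMn.
by rewrite ler_wpM2r ?sqr_ge0 // sqr_le_of_norm.
Qed.

Lemma L2norm2_commD_Mop_snd v : measurable_fun setT (v.1 : OmegaM -> R) ->
  L2norm2 mu (commD (Mop f) v).2 <= (c ^+ 2)%:E * L2norm2 mu v.1.
Proof.
move=> mv1; set u := fun x : OmegaM => (v.1 x ^+ 2)%:E.
have u_meas : measurable_fun setT u := measurable_sqr_EFin mv1.
have u0 x : 0 <= u x by rewrite lee_fin sqr_ge0.
have ua_meas a : measurable_fun setT (fun x : OmegaM => u (prefixO a x)).
  exact: measurableT_comp u_meas (measurable_prefixO a).
apply: (@le_trans _ _ (\int[mu]_x ((c ^+ 2 / 2)%:E * (u (prefixO false x) + u (prefixO true x))))).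
  apply: ge0_le_integral => //.
  - by move=> x _; rewrite lee_fin sqr_ge0.
  - apply: measurable_sqr_EFin; rewrite /commD /=.
    apply: measurable_funB; first exact: measurable_Lop (measurable_funM mf mv1).
    exact: measurable_funM mf (measurable_Lop mv1).
  - by apply: emeasurable_funM => //; exact: emeasurable_funD.
  move=> x _; rewrite /u -EFinD -EFinM lee_fin commD_Mop_snd.
  by apply: sqr_avg_le; rewrite distrC; exact: fc.
rewrite ge0_integralZl_EFin ?divr_ge0 ?sqr_ge0 //; last first.
- exact: emeasurable_funD.
- by move=> x _; rewrite adde_ge0.
by rewrite ge0_integralD // ge0_integral_prefixO // muleA -EFinM divfK.
Qed.

Lemma opbound_commD_Mop : opbound mu (commD (Mop f)) c.
Proof.
move=> v [mv1 _] [mv2 _].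
have c0 : (0 <= c)%R := le_trans (normr_ge0 _) (fc point).
rewrite /Hnorm sqrte_le_mulE //; last exact: adde_ge0 (L2norm2_ge0 _ _) (L2norm2_ge0 _ _).
rewrite ge0_muleDr ?L2norm2_ge0 // [leRHS]addeC.
by apply: leeD; [exact: L2norm2_commD_Mop_fst | exact: L2norm2_commD_Mop_snd].
Qed.

End upper_bound.

Section lower_bound.
Variables (R : realType) (mu : probability OmegaM R) (f : Omega -> R) (C : R).
Hypothesis Hmu : max_entropy_measure mu.
Hypothesis mf : measurable_fun setT (f : OmegaM -> R).
Hypotheses (C0 : (0 <= C)%R) (fC : opbound mu (commD (Mop f)) C).
Local Open Scope ereal_scope.

Lemma L2norm2_Kop_indic (A : set Omega) :
  measurable (A : set OmegaM) -> L2norm2 mu (Kop \1_A) = mu A.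
Proof.
move=> mA; have sq x : ((\1_A x : R) ^+ 2 = \1_A x)%R.
  by rewrite indicE; case: (x \in A); rewrite ?expr1n ?expr0n.
rewrite /L2norm2 /Kop /=; under eq_integral do rewrite sq.
rewrite (ge0_integral_shiftO Hmu (h := fun y => (\1_A y)%:E)) ?integral_indic ?setIT //.
by apply/measurable_EFinP; exact: measurable_indic.
Qed.

Lemma L2norm2_commD_Mop_Kop_indic_ge (A : set Omega) (c : R) :
  measurable (A : set OmegaM) -> (0 <= c)%R -> (forall x, A x -> c <= `|Lop f x - f x|)%R ->
  (c ^+ 2)%:E * mu A <= L2norm2 mu (commD (Mop f) (Kop \1_A, fun=> 0%R)).2.
Proof.
move=> mA c0 cAd.
have -> : (commD (Mop f) (Kop \1_A, fun=> 0%R)).2 = fun x => (\1_A x * (Lop f x - f x))%R.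
  by apply/funext => x; exact: commD_Mop_Kop_snd.
have mindic : measurable_fun setT (\1_A : OmegaM -> R) by exact: measurable_indic.
rewrite -[X in _ * mu X]setIT -integral_indic // -ge0_integralZl_EFin ?sqr_ge0 //;
  last by apply/measurable_EFinP.
apply: ge0_le_integral => //.
- by move=> x _; rewrite lee_fin mulr_ge0 ?sqr_ge0.
- by apply/measurable_EFinP; apply: measurable_funM.
- apply: measurable_sqr_EFin; apply: measurable_funM => //.
  exact: measurable_funB (measurable_Lop mf) mf.
move=> x _; rewrite -EFinM lee_fin indicE.
have [/set_mem xA|_] := boolP (x \in A); last by rewrite !mul0r mulr0 expr0n.
by rewrite mulr1 mul1r -[leRHS]real_normK ?num_real // lerXn2r ?nnegrE ?cAd.
Qed.

Lemma le_opbound_on (A : set Omega) (c : R) :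
  measurable (A : set OmegaM) -> 0 < mu A -> (0 <= c)%R ->
  (forall x, A x -> c <= `|Lop f x - f x|)%R -> (c <= C)%R.
Proof.
move=> mA muA0 c0 cAd.
pose v : (Omega -> R) * (Omega -> R) := (Kop \1_A, fun=> 0%R).
have v1A : L2norm2 mu v.1 = mu A := L2norm2_Kop_indic mA.
have v20 : L2norm2 mu v.2 = 0 by exact: L2norm2_eq0.
have T10 : L2norm2 mu (commD (Mop f) v).1 = 0.
  by apply: L2norm2_eq0 => x; rewrite commD_Mop_fst mulr0.
have muA_lty : mu A < +oo := le_lt_trans (probability_le1 mu mA) (ltry 1).
have L2v1 : L2 mu v.1.
  split; first exact: measurable_Kop (measurable_indic mA).
  by rewrite -v1A in muA_lty.
have L2v2 : L2 mu v.2 by split; [exact: measurable_cst | rewrite -/(L2norm2 _ _) v20].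
have := fC L2v1 L2v2; rewrite /Hnorm sqrte_le_mulE //; last first.
  exact: adde_ge0 (L2norm2_ge0 _ _) (L2norm2_ge0 _ _).
rewrite v1A v20 T10 adde0 add0e.
move/(le_trans (L2norm2_commD_Mop_Kop_indic_ge mA c0 cAd)).
by rewrite lee_pmul2r ?ge0_fin_numE // lee_fin ler_pXn2r ?nnegrE.
Qed.

Lemma normr_sub_Lop_le : continuous f -> forall x, (`|f x - Lop f x| <= C)%R.
Proof.
move=> cf x; set d := fun y => (f y - Lop f y)%R.
have cd : continuous d by move=> y; apply: cvgB; [exact: cf | exact: Lop_continuous].
apply/ler_addgt0Pr => e e0.
have [n close] := continuous_cyl_close (cd x) e0.
have [dxe|edx] := leP (`|d x|)%R e; first by rewrite (le_trans dxe) // lerDr.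
rewrite -lerBlDr; apply: (le_opbound_on (A := cyl (mkseq x n))).
- exact: measurable_cyl.
- by rewrite Hmu size_mkseq lte_fin invr_gt0 exprn_gt0.
- by rewrite subr_ge0 ltW.
move=> y /close dxy; rewrite !(distrC (Lop f _)).
have := ler_normD (d x - d y)%R (d y); rewrite subrK /d in dxy * => ?; lra.
Qed.

End lower_bound.

Section supremum_norm.
Variable R : realType.
Implicit Types g h : Omega -> R.
Local Open Scope ereal_scope.

Lemma eq_supn_norm g h : (forall x, `|g x| = `|h x|)%R -> supn g = supn h.
Proof.
move=> gh; rewrite /supn; congr ereal_sup.
by apply/seteqP; split=> _ [x _ <-]; exists x; rewrite ?gh.
Qed.

Lemma supn_Kop g : supn (Kop g) = supn g.
Proof.
rewrite /supn; congr ereal_sup; apply/seteqP; split=> _ [x _ <-].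
  by exists (shiftO x).
by exists (prefixO false x).
Qed.

Lemma opnorm_le_supn (mu : probability OmegaM R) T g :
  (forall c, (forall x, `|g x| <= c)%R -> opbound mu T c) -> opnorm mu T <= supn g.
Proof.
move=> gT; have g_le x : (`|g x|)%:E <= supn g by apply: ereal_sup_ubound; exists x.
have : 0 <= supn g by apply: le_trans (g_le point); rewrite lee_fin.
move: g_le; case: (supn g) => [c g_le c0| _ _|//]; last exact: leey.
apply: ereal_inf_lbound; exists c => //; split; first by rewrite -lee_fin.
by apply: gT => x; rewrite -lee_fin.
Qed.

Lemma supn_le_opnorm (mu : probability OmegaM R) T g :
  (forall C, (0 <= C)%R -> opbound mu T C -> forall x, `|g x| <= C)%R ->
  supn g <= opnorm mu T.
Proof.
move=> Tg; apply: le_ereal_inf_tmp => _ [C [C0 TC] <-].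
by apply: ge_ereal_sup => _ [x _ <-]; rewrite lee_fin; exact: Tg.
Qed.

End supremum_norm.

Lemma Lop_shiftO (R : realType) (f : Omega -> R) :
  (forall x y : Omega, (forall i, x i.+1 = y i.+1) -> f x = f y) ->
  forall x, Lop f (shiftO x) = f x.
Proof.
move=> f_tail x; rewrite /Lop !(f_tail (prefixO _ _) x) //.
by rewrite mulrDl -splitr.
Qed.

Theorem theorem2p10 (R : realType) (mu : probability OmegaM R)
  (Hmu : max_entropy_measure mu) (f : Omega -> R) (Hf : continuous f) :
  [/\ supn (fun x => (f x - f (shiftO x))%R) = supn (fun x => (Kop f x - f x)%R),
      (opnorm mu (commD (Mop f)) <= supn (fun x => (Kop f x - f x)%R))%E,
      (supn (fun x => (f x - Lop f x)%R) <= opnorm mu (commD (Mop f)))%E &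
      ((forall x y : Omega, (forall i, x i.+1 = y i.+1) -> f x = f y) ->
        supn (fun x => (Kop f x - f x)%R) = opnorm mu (commD (Mop f)) /\
        opnorm mu (commD (Mop f)) = supn (fun x => (f x - Lop f x)%R))].
Proof.
have mf := continuous_measurable_cantor Hf.
have upper : (opnorm mu (commD (Mop f)) <= supn (fun x => (Kop f x - f x)%R))%E.
  by apply: opnorm_le_supn => c; exact: opbound_commD_Mop.
have lower : (supn (fun x => (f x - Lop f x)%R) <= opnorm mu (commD (Mop f)))%E.
  by apply: supn_le_opnorm => C C0 fC x; exact: normr_sub_Lop_le.
split=> // [|f_tail]; first by apply: eq_supn_norm => x; rewrite distrC.
have E : supn (fun x => Kop f x - f x) = supn (fun x => f x - Lop f x).
  by rewrite -[RHS]supn_Kop; apply: eq_supn_norm => x; rewrite /Kop /= Lop_shiftO.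
by split; apply/le_anti/andP; split; rewrite ?E // -E.
Qed.
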